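(* Let $n_0, L\in\mathbb{N}_+$, $n_1,\dots,n_L\in\mathbb{N}_+$, and let $h_l\in\mathrm{RL}(n_{l-1},n_l)$ for $l=1,\dots,L$, with $\mathbf{h}=(h_1,\dots,h_L)$. Let $\gamma\in\Gamma$. Then $$|\mathcal{S}_{\mathbf{h}}|\le\big\|\varphi^{(\gamma)}_{n_L}\circ\dots\circ\varphi^{(\gamma)}_{n_1}({\rm e}_{n_0})\big\|_1 .$$
   Context: $\mathbb{N}=\{0,1,2,\dots\}$, $\mathbb{N}_+=\mathbb{N}\setminus\{0\}$, $\sigma(x)=\max(0,x)$. For $n,n'\in\mathbb{N}_+$, $\mathrm{RL}(n,n')$ is the set of maps $h:\mathbb{R}^n\to\mathbb{R}^{n'}$ of the form $h(x)_i=\sigma(\langle x,w_i\rangle+b_i)$, $i=1,\dots,n'$, for some matrix $W\in\mathbb{R}^{n'\times n}$ with rows $w_i$ and $b\in\mathbb{R}^{n'}$. The signature $S_h(x)\in\{0,1\}^{n'}$ has $S_h(x)_i=1$ iff $\langle x,w_i\rangle+b_i>0$; $\mathcal{S}_h=\{S_h(x):x\in\mathbb{R}^n\}$. By convention $\mathrm{RL}(0,n')$ consists of the constant maps $\{0\}\to\mathbb{R}^{n'}$, and for such $h$ one sets $\mathcal{H}_{n'}(\mathcal{S}_h)={\rm e}_0$. For $\mathbf{h}=(h_1,\dots,h_L)$ the multi signature of $x\in\mathbb{R}^{n_0}$ is $S_{\mathbf{h}}(x)=(S_{h_1}(x),S_{h_2}(h_1(x)),\dots,S_{h_L}(h_{L-1}\circ\dots\circ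 h_1(x)))$ and $\mathcal{S}_{\mathbf{h}}=\{S_{\mathbf{h}}(x):x\in\mathbb{R}^{n_0}\}$. For $s\in\{0,1\}^{k}$, $|s|=\sum_i s_i$. Histograms: $V$ is the set of sequences $v=(v_j)_{j\in\mathbb{N}}$ of elements of $\mathbb{N}$ with $\sum_j v_j<\infty$; $\|v\|_1=\sum_j v_j$; ${\rm e}_i\in V$ has $({\rm e}_i)_j=\delta_{ij}$. For $v,w\in V$, $v\preceq w$ iff $\sum_{j\ge J}v_j\le\sum_{j\ge J}w_j$ for all $J\in\mathbb{N}$. For a finite family $(v^{(i)})_{i\in I}$ in $V$, $\max_{i}(v^{(i)})\in V$ is defined by $\max_i(v^{(i)})_J=\max_i\sum_{j\ge J}v^{(i)}_j-\max_i\sum_{j\ge J+1}v^{(i)}_j$. For $\mathcal{S}\subseteq\{0,1\}^{n'}$, the activation histogram is $\mathcal{H}_{n'}(\mathcal{S})=(|\{s\in\mathcal{S}:|s|=j\}|)_{j\in\mathbb{N}}$. Bound condition: $\Gamma$ is the set of families $\gamma=(\gamma_{n,n'})_{n'\in\mathbb{N}_+,\,n\in\{0,\dots,n'\}}$ of elements of $V$ such that (i) $\max\{\mathcal{H}_{n'}(\mathcal{S}_h):h\in\mathrm{RL}(n,n')\}\preceq\gamma_{n,n'}$ for all $n'\in\mathbb{N}_+$, $n\in\{0,\dots,n'\}$, and (ii) $n\le\tilde n\le n'$ implies $\gamma_{n,n'}\preceq\gamma_{\tilde n,n'}$. Clipping: for $i^*\in\mathbb{N}$, $\mathrm{cl}_{i^*}:V\to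 V$, $\mathrm{cl}_{i^*}(v)_i=v_i$ for $i<i^*$, $=\sum_{j\ge i^*}v_j$ for $i=i^*$, $=0$ for $i>i^*$. Transition map: for $n'\in\mathbb{N}_+$, $\gamma\in\Gamma$, $\varphi^{(\gamma)}_{n'}:V\to V$, $\varphi^{(\gamma)}_{n'}(v)=\sum_{n=0}^\infty v_n\,\mathrm{cl}_{\min(n,n')}(\gamma_{\min(n,n'),n'})$. *)

From HB Require Import structures.
From mathcomp Require Import all_boot all_order all_algebra.
From mathcomp Require Import boolp reals.
Set Implicit Arguments. Unset Strict Implicit. Unset Printing Implicit Defensive.
Import Order.TTheory GRing.Theory Num.Theory.

(* ---------- Histograms: V represented by finite lists, v_j = nth 0 v j ---- *)
Definition hist := seq nat.
Definition hcoef (v : hist) (j : nat) : nat := nth 0 v j.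
Definition htail (v : hist) (J : nat) : nat := sumn (drop J v).
Definition hnorm1 (v : hist) : nat := sumn v.
Definition he (i : nat) : hist := rcons (nseq i 0) 1.
Definition hle (v w : hist) : Prop := forall J : nat, htail v J <= htail w J.
Definition hmaxT (fam : seq hist) (J : nat) : nat := \max_(v <- fam) htail v J.
Definition hmax (fam : seq hist) : hist :=
  mkseq (fun J => hmaxT fam J - hmaxT fam J.+1) (\max_(v <- fam) size v).
Definition hadd (v w : hist) : hist :=
  mkseq (fun k => hcoef v k + hcoef w k) (maxn (size v) (size w)).
Definition hscale (c : nat) (v : hist) : hist := map (muln c) v.
Definition hclip (istar : nat) (v : hist) : hist :=
  mkseq (fun i => if i < istar then hcoef v i else htail v istar) istar.+1.

Definition relu {R : realType} (t : R) : R := Num.max 0%R t.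

Definition preact {R : realType} (n n' : nat) (W : 'I_n' -> 'I_n -> R)
  (b : 'I_n' -> R) (x : 'I_n -> R) (i : 'I_n') : R :=
  (\sum_(j < n) x j * W i j + b i)%R.

Definition signature {R : realType} (n n' : nat) (W : 'I_n' -> 'I_n -> R)
  (b : 'I_n' -> R) (x : 'I_n -> R) : {ffun 'I_n' -> bool} :=
  [ffun i => (0 < preact W b x i)%R].

Definition sigset {R : realType} (n n' : nat) (W : 'I_n' -> 'I_n -> R)
  (b : 'I_n' -> R) : {set {ffun 'I_n' -> bool}} :=
  [set s | `[< exists x : 'I_n -> R, signature W b x = s >]].

Definition weight (k : nat) (s : {ffun 'I_k -> bool}) : nat := \sum_(i < k) nat_of_bool (s i).

Definition acthist (n' : nat) (S : {set {ffun 'I_n' -> bool}}) : hist :=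
  mkseq (fun j => #|[set s in S | weight s == j]|) n'.+1.

(* the set {H_{n'}(S_h) : h in RL(n,n')}, with the convention for n = 0 *)
Definition RLhists (R : realType) (n n' : nat) (v : hist) : Prop :=
  if n == 0 then v = he 0
  else exists (W : 'I_n' -> 'I_n -> R) (b : 'I_n' -> R), v = acthist (sigset W b).

(* gamma in Gamma; gamma n n' stands for gamma_{n,n'} *)
Definition inGamma (R : realType) (gamma : nat -> nat -> hist) : Prop :=
  (forall n' n, 0 < n' -> n <= n' ->
     exists fam : seq hist,
       (forall v, v \in fam <-> RLhists R n n' v) /\ hle (hmax fam) (gamma n n'))
  /\ (forall n' n nt, 0 < n' -> n <= nt -> nt <= n' -> hle (gamma n n') (gamma nt n')).

Definition phi (gamma : nat -> nat -> hist) (n' : nat) (v : hist) : hist :=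
  foldr hadd [::]
    [seq hscale (hcoef v k) (hclip (minn k n') (gamma (minn k n') n')) | k <- iota 0 (size v)].

Definition phi_comp (gamma : nat -> nat -> hist) (ns : nat -> nat) (L : nat) : hist :=
  foldl (fun v l => phi gamma (ns l) v) (he (ns 0)) (iota 1 L).

(* ---------- networks: layer l+1 maps R^{ns l} -> R^{ns (l+1)} ---------- *)
Fixpoint forward {R : realType} (ns : nat -> nat)
  (Ws : forall l : nat, 'I_(ns l.+1) -> 'I_(ns l) -> R)
  (bs : forall l : nat, 'I_(ns l.+1) -> R) (x : 'I_(ns 0) -> R) (l : nat)
  : 'I_(ns l) -> R :=
  match l return 'I_(ns l) -> R with
  | 0 => x
  | k.+1 => fun i => relu (preact (Ws k) (bs k) (@forward R ns Ws bs x k) i)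
  end.
Arguments forward {R ns} Ws bs x l _.

Definition multisig {R : realType} (ns : nat -> nat) (L : nat)
  (Ws : forall l : nat, 'I_(ns l.+1) -> 'I_(ns l) -> R)
  (bs : forall l : nat, 'I_(ns l.+1) -> R) (x : 'I_(ns 0) -> R)
  : {dffun forall l : 'I_L, {ffun 'I_(ns (nat_of_ord l).+1) -> bool}} :=
  [ffun l : 'I_L => @signature R (ns (nat_of_ord l)) (ns (nat_of_ord l).+1) (Ws (nat_of_ord l)) (bs (nat_of_ord l)) (forward Ws bs x (nat_of_ord l))].

Definition multisigset {R : realType} (ns : nat -> nat) (L : nat)
  (Ws : forall l : nat, 'I_(ns l.+1) -> 'I_(ns l) -> R)
  (bs : forall l : nat, 'I_(ns l.+1) -> R) :=
  [set s | `[< exists x : 'I_(ns 0) -> R, multisig L Ws bs x = s >]].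

From HB Require Import structures.
From mathcomp Require Import all_boot all_order all_algebra.
From mathcomp Require Import boolp reals.
From mathcomp Require Import zify.
Set Implicit Arguments. Unset Strict Implicit. Unset Printing Implicit Defensive.
Import Order.TTheory GRing.Theory Num.Theory.

(* Count the multi-signatures layer by layer while keeping track of the
   dimension of the set of inputs.  Write N_L(k) for the l1-norm of
   phi_{n_L} o ... o phi_{n_1} (e_k) and prove, more generally, that inputs
   ranging over an affine image of R^d produce at most N_L(d)
   multi-signatures.  On the inputs with a given first-layer signature s, h_1
   is affine and vanishes off the units active in s, so their images range
   over an affine image of R^(min(|s|, d)): by induction they contribute at
   most N_(L-1)(min(|s|, d)) multi-signatures.  The first-layer signatures
   are those of a layer in RL(min(d, n_1), n_1), so the tails of the
   histogram of their weights clipped at d are bounded by those of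
   cl(gamma_{min(d,n_1),n_1}) = phi_{n_1}(e_d).  Finally N_(L-1) is
   nondecreasing (because gamma is), so summation by parts turns this tail
   bound into sum_s N_(L-1)(min(|s|, d)) <= sum_j phi_{n_1}(e_d)_j N_(L-1)(j),
   which is N_L(d) by linearity of the transition maps. *)

(** * Histograms *)

Lemma htailS v i : htail v i = hcoef v i + htail v i.+1.
Proof.
rewrite /htail /hcoef; case: (ltnP i (size v)) => H; first by rewrite (drop_nth 0 H).
by rewrite !drop_oversize ?nth_default // leqW.
Qed.

Lemma leq_htailS v i : htail v i.+1 <= htail v i.
Proof. by rewrite (htailS v i) leq_addl. Qed.

Lemma htail_oversize v J : size v <= J -> htail v J = 0.
Proof. by move=> H; rewrite /htail drop_oversize. Qed.

Lemma hnorm1_htail0 v : hnorm1 v = htail v 0.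
Proof. by rewrite /htail drop0. Qed.

Lemma htail_split v J i : J <= i ->
  htail v J = \sum_(k < i) (J <= k) * hcoef v k + htail v i.
Proof.
elim: i => [|i IH]; first by rewrite leqn0 => /eqP ->; rewrite big_ord0.
rewrite leq_eqVlt => /orP [/eqP <-|HJ].
  by rewrite big1 // => k _; rewrite leqNgt ltn_ord.
rewrite ltnS in HJ.
by rewrite (IH HJ) big_ord_recr /= (htailS v i) HJ mul1n addnA.
Qed.

Lemma htail_sum v J m : size v <= m ->
  htail v J = \sum_(k < m) (J <= k) * hcoef v k.
Proof.
move=> Hm; case: (leqP J m) => HJ.
  by rewrite (htail_split v HJ) (htail_oversize Hm) addn0.
rewrite htail_oversize ?(leq_trans Hm (ltnW HJ)) // big1 // => k _.
by rewrite leqNgt (ltn_trans (ltn_ord k) HJ).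
Qed.

Lemma sum_hcoef_widen v m (G : nat -> nat) : size v <= m ->
  \sum_(k < m) hcoef v k * G k = \sum_(k < size v) hcoef v k * G k.
Proof.
move=> Hm; rewrite (big_ord_widen m (fun k => hcoef v k * G k) Hm) [RHS]big_mkcond.
by apply: eq_bigr => k _; case: ltnP => // Hk; rewrite /hcoef nth_default.
Qed.

Lemma hcoef_he k j : hcoef (he k) j = (j == k).
Proof.
rewrite /hcoef /he nth_rcons size_nseq nth_nseq.
by case: ltngtP => //= _; rewrite if_same.
Qed.

Lemma size_he k : size (he k) = k.+1.
Proof. by rewrite size_rcons size_nseq. Qed.

Lemma hnorm1_he k : hnorm1 (he k) = 1.
Proof. by rewrite /hnorm1 /he sumn_rcons sumn_nseq. Qed.

Lemma hcoef_hadd v w j : hcoef (hadd v w) j = hcoef v j + hcoef w j.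
Proof.
rewrite /hadd /hcoef; case: (ltnP j (maxn (size v) (size w))) => H.
  by rewrite nth_mkseq.
rewrite geq_max in H; case/andP: H => Hv Hw.
by rewrite !nth_default ?size_mkseq ?geq_max ?Hv ?Hw.
Qed.

Lemma hcoef_hscale c v j : hcoef (hscale c v) j = c * hcoef v j.
Proof.
rewrite /hscale /hcoef; case: (ltnP j (size v)) => H; first by rewrite (nth_map 0).
by rewrite !nth_default ?size_map // muln0.
Qed.

Lemma size_hclip i v : size (hclip i v) = i.+1.
Proof. by rewrite size_mkseq. Qed.

Lemma htail_hclip i v J : htail (hclip i v) J = if J <= i then htail v J else 0.
Proof.
have coefE k : k < i.+1 -> hcoef (hclip i v) k = if k < i then hcoef v k else htail v i.
  by move=> Hk; rewrite /hcoef nth_mkseq.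
rewrite (@htail_sum _ J i.+1) ?size_hclip // big_ord_recr /= coefE // ltnn.
under eq_bigr => k _ do rewrite (coefE k (leqW (ltn_ord k))) (ltn_ord k).
case: ifP => HJ; first by rewrite mul1n (htail_split v HJ).
rewrite mul0n addn0 big1 // => k _.
by rewrite leqNgt (ltn_trans (ltn_ord k)) // ltnNge HJ.
Qed.

Lemma sum_tail_telescope (T : nat -> nat) m J : (forall k, T k.+1 <= T k) ->
  \sum_(k < m) (J <= k) * (T k - T k.+1) = T (minn J m) - T m.
Proof.
move=> HT.
have Tdecr := homo_leq (r := fun a b => b <= a) leqnn (fun _ _ _ h1 h2 => leq_trans h2 h1) HT.
elim: m => [|m IH]; first by rewrite big_ord0 minn0 subnn.
rewrite big_ord_recr /= IH; case: (leqP J m) => HJ.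
  by rewrite mul1n (minn_idPl (leqW HJ)); have := Tdecr _ _ HJ; have := HT m; lia.
by rewrite mul0n addn0 (minn_idPr HJ) !subnn.
Qed.

Lemma htail_hmax fam J : htail (hmax fam) J = hmaxT fam J.
Proof.
set T := hmaxT fam; set m := \max_(w <- fam) size w.
have HT k : T k.+1 <= T k.
  apply/bigmax_leqP_seq => w Hw _; apply: leq_trans (leq_htailS w k) _.
  exact: (leq_bigmax_seq (F := htail^~ k) w Hw isT).
have T_oversize k : m <= k -> T k = 0.
  move=> Hk; apply/eqP; rewrite -leqn0; apply/bigmax_leqP_seq => w Hw _.
  by rewrite htail_oversize // (leq_trans _ Hk) // (leq_bigmax_seq (F := size) w Hw isT).
rewrite (@htail_sum _ J m) ?size_mkseq //.
under eq_bigr => k _ do rewrite /hcoef nth_mkseq //.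
rewrite sum_tail_telescope // -/T (T_oversize m) // subn0.
by case: (leqP J m) => // HJ; rewrite !T_oversize // ltnW.
Qed.

Lemma leq_htail_hmax fam v J : v \in fam -> htail v J <= htail (hmax fam) J.
Proof. by move=> Hv; rewrite htail_hmax; exact: (leq_bigmax_seq (F := htail^~ J) v Hv isT). Qed.

(** * Summation by parts and counting *)

Lemma sum_ord_pred1 m a (N : nat -> nat) :
  \sum_(k < m) (a == k :> nat) * N k = (a < m) * N a.
Proof.
elim: m => [|m IH]; first by rewrite big_ord0.
rewrite big_ord_recr /= IH (ltnS a m) (leq_eqVlt a m).
by case: (ltngtP a m) => [| |->] /=; rewrite ?mul0n ?addn0 ?add0n.
Qed.

(* [t K.-1 * (0 < K)] stands for [t (K - 1)], with [t (-1) = 0]. *)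
Lemma sum_by_parts m (u t : nat -> nat) : (forall k, t k <= t k.+1) ->
  \sum_(k < m) u k * t k =
  \sum_(K < m) (t K - t K.-1 * (0 < K)) * \sum_(k < m) (K <= k) * u k.
Proof.
move=> Ht; have tmono := homo_leq leqnn leq_trans Ht.
have sum_increments n : \sum_(K < n.+1) (t K - t K.-1 * (0 < K)) = t n.
  elim: n => [|n IH]; first by rewrite big_ord_recr big_ord0 /= muln0 subn0.
  by rewrite big_ord_recr /= IH muln1 subnKC.
elim: m => [|m IH]; first by rewrite !big_ord0.
rewrite big_ord_recr /= IH.
under [in RHS]eq_bigr => K _ do rewrite big_ord_recr /= mulnDr.
rewrite big_split big_ord_recr /=.
have -> : \sum_(k < m) (m <= k) * u k = 0 by rewrite big1 // => k _; rewrite leqNgt ltn_ord.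
rewrite muln0 addn0; congr (_ + _); under eq_bigr => i _ do rewrite leq_ord mul1n.
by rewrite -big_distrl sum_increments mulnC.
Qed.

Lemma leq_sum_by_parts m (u w t : nat -> nat) : (forall k, t k <= t k.+1) ->
  (forall J, \sum_(k < m) (J <= k) * u k <= \sum_(k < m) (J <= k) * w k) ->
  \sum_(k < m) u k * t k <= \sum_(k < m) w k * t k.
Proof.
move=> Ht Htails; rewrite !(sum_by_parts _ _ Ht).
by apply: leq_sum => K _; apply: leq_mul.
Qed.

Lemma sum_nat_bool_count (T : Type) (r : seq T) (a : pred T) :
  \sum_(i <- r) (a i : nat) = count a r.
Proof. by elim: r => [|x r IH]; rewrite ?big_nil ?big_cons ?IH. Qed.

Lemma size_partition (T U : eqType) (g : T -> U) (S : seq T) (F : seq U) :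
  uniq F -> {subset [seq g t | t <- S] <= F} ->
  size S = \sum_(f <- F) count (fun t => g t == f) S.
Proof.
move=> Fu; elim: S => [|t S IH] HS /=; first by rewrite big1.
rewrite big_split /= -IH => [|t' Ht']; last by apply: HS; rewrite inE Ht' orbT.
rewrite sum_nat_bool_count (eq_count (a2 := pred1 (g t))) => [|f]; last by rewrite eq_sym.
by rewrite count_uniq_mem // HS ?mem_head.
Qed.

Lemma pos_widths_shift (ns : nat -> nat) L :
  (forall l, 0 < l <= L.+1 -> 0 < ns l) -> forall l, 0 < l <= L -> 0 < ns l.+1.
Proof. by move=> Hns l /andP [_ lL]; apply: Hns; rewrite ltn0Sn ltnS. Qed.

Lemma uniq_behead_class (T : eqType) (S : seq (seq T)) x0 f :
  uniq S -> [::] \notin S -> uniq [seq behead t | t <- S & head x0 t == f].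
Proof.
move=> Su S0; have headK t : t \in S -> head x0 t :: behead t = t.
  by case: t => // H; rewrite H in S0.
rewrite map_inj_in_uniq ?filter_uniq // => t1 t2.
rewrite !mem_filter => /andP [/eqP h1 t1S] /andP [/eqP h2 t2S] Eb.
by rewrite -(headK t1) // -(headK t2) // h1 h2 Eb.
Qed.

Lemma sum_by_value (T : eqType) (g : T -> nat) (N : nat -> nat) F m :
  (forall f, f \in F -> g f < m) ->
  \sum_(f <- F) N (g f) = \sum_(k < m) count (fun f => g f == k) F * N k.
Proof.
elim: F => [|a F IH] HF; first by rewrite big_nil big1.
rewrite big_cons IH => [|f Hf]; last by apply: HF; rewrite inE Hf orbT.
under [RHS]eq_bigr => k _ do rewrite /= mulnDl.
by rewrite big_split /= sum_ord_pred1 HF ?mem_head // mul1n.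
Qed.

Lemma tail_by_value (T : eqType) (g : T -> nat) F m J :
  (forall f, f \in F -> g f < m) ->
  \sum_(k < m) (J <= k) * count (fun f => g f == k) F = count (fun f => J <= g f) F.
Proof.
elim: F => [|a F IH] HF; first by rewrite big1 // => k _; rewrite muln0.
under eq_bigr => k _ do rewrite /= mulnDr mulnC.
rewrite big_split /= (sum_ord_pred1 m (g a) (fun k => nat_of_bool (J <= k))).
by rewrite HF ?mem_head // mul1n IH // => f Hf; apply: HF; rewrite inE Hf orbT.
Qed.

(** * Signatures as bit sequences *)

Definition bitseq_of k (s : {ffun 'I_k -> bool}) : bitseq := [seq s i | i <- enum 'I_k].

Lemma nth_bitseq_of k s (i : 'I_k) : nth false (bitseq_of s) i = s i.
Proof. by rewrite (nth_map i) ?size_enum_ord // nth_ord_enum. Qed.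

Lemma bitseq_of_inj k : injective (@bitseq_of k).
Proof. by move=> s t E; apply/ffunP => i; rewrite -!nth_bitseq_of E. Qed.

Lemma count_bitseq_of k (s : {ffun 'I_k -> bool}) : count id (bitseq_of s) = weight s.
Proof. by rewrite count_map -sum_nat_bool_count big_enum. Qed.

Lemma weight_le k (s : {ffun 'I_k -> bool}) : weight s <= k.
Proof.
by rewrite -count_bitseq_of (leq_trans (count_size _ _)) // size_map size_enum_ord.
Qed.

Lemma htail_acthist n' (S : {set {ffun 'I_n' -> bool}}) J :
  htail (acthist S) J = #|[set s in S | J <= weight s]|.
Proof.
have card_sum (P : pred {ffun 'I_n' -> bool}) : #|[set s in S | P s]| = \sum_(s in S) (P s : nat).
  rewrite -sum1dep_card [RHS]big_mkcond [LHS]big_mkcond.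
  by apply: eq_bigr => s _; case: (s \in S); case: (P s).
rewrite (@htail_sum _ J n'.+1) ?size_mkseq //.
under eq_bigr => k _ do rewrite /hcoef nth_mkseq // card_sum big_distrr.
rewrite exchange_big card_sum; apply: eq_bigr => s _.
have := sum_ord_pred1 n'.+1 (weight s) (fun k => J <= k).
rewrite ltnS weight_le mul1n => <-.
by apply: eq_bigr => k _; rewrite mulnC eq_sym.
Qed.

Lemma count_le_card_bitseq k (S : {set {ffun 'I_k -> bool}}) (P : pred bitseq) F :
  uniq F -> (forall f, f \in F -> exists2 s, s \in S & f = bitseq_of s) ->
  count P F <= #|[set s in S | P (bitseq_of s)]|.
Proof.
move=> Fu HF; rewrite -size_filter cardE -(size_map (@bitseq_of k)).
apply: uniq_leq_size => [|f]; first exact: filter_uniq.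
rewrite mem_filter => /andP [Pf /HF [s Ss Ef]].
by apply/mapP; exists s; rewrite // mem_enum inE Ss -Ef.
Qed.

(** * Affine images and signatures *)

Section AffineImages.
Variable R : realType.
Local Open Scope ring_scope.

Definition sub_affine_image n d (X : ('I_n -> R) -> Prop) :=
  exists (M : 'I_n -> 'I_d -> R) (c : 'I_n -> R),
    forall x, X x -> exists y : 'I_d -> R, x =1 preact M c y.

Lemma preact_eq n n' (W : 'I_n' -> 'I_n -> R) b x x' :
  x =1 x' -> preact W b x =1 preact W b x'.
Proof. by move=> Ex i; rewrite /preact; under eq_bigr => j _ do rewrite Ex. Qed.

Lemma preact_comp n n' d (W : 'I_n' -> 'I_n -> R) b (M : 'I_n -> 'I_d -> R) c y :
  preact W b (preact M c y) =1
  preact (fun i k => \sum_j M j k * W i j) (fun i => \sum_j c j * W i j + b i) y.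
Proof.
move=> i; rewrite /preact addrA; congr (_ + _).
under eq_bigr => j _ do rewrite mulrDl big_distrl /=.
rewrite big_split /= exchange_big; congr (_ + _); apply: eq_bigr => k _.
by rewrite big_distrr /=; apply: eq_bigr => j _; rewrite mulrA.
Qed.

Lemma preact_idmx n (z : 'I_n -> R) :
  preact (fun i j => (i == j)%:R) (fun _ => 0) z =1 z.
Proof.
move=> i; rewrite /preact addr0 (bigD1 i) //= eqxx mulr1 big1 ?addr0 // => j /negbTE.
by rewrite eq_sym => ->; rewrite mulr0.
Qed.

Lemma signature_eq n n' m (W : 'I_n' -> 'I_n -> R) b (W' : 'I_n' -> 'I_m -> R) b' x y :
  preact W b x =1 preact W' b' y -> signature W b x = signature W' b' y.
Proof. by move=> E; apply/ffunP => i; rewrite !ffunE E. Qed.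

Lemma relu_preact n n' (W : 'I_n' -> 'I_n -> R) b x i :
  relu (preact W b x i) = if signature W b x i then preact W b x i else 0.
Proof. by rewrite ffunE. Qed.

Lemma sub_affine_imageT n : sub_affine_image n (fun _ : 'I_n -> R => True).
Proof.
by exists (fun i j => (i == j)%:R), (fun _ => 0) => x _; exists x => i; rewrite preact_idmx.
Qed.

Lemma sub_affine_image_support n (A : {set 'I_n}) (Z : ('I_n -> R) -> Prop) :
  (forall z, Z z -> forall i, i \notin A -> z i = 0) -> sub_affine_image #|A| Z.
Proof.
move=> HZ; exists (fun i k => (i == enum_val k)%:R), (fun _ => 0) => z Zz.
exists (fun k => z (enum_val k)) => i; rewrite /preact addr0.
rewrite -(big_enum_val (A := mem A) (fun j => z j * (i == j)%:R)) /=.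
case: (boolP (i \in A)) => Hi.
  rewrite (bigD1 i) //= eqxx mulr1 big1 ?addr0 // => j /andP [_ /negbTE].
  by rewrite eq_sym => ->; rewrite mulr0.
rewrite HZ // big1 // => j Hj; case: eqP => [Eij|_]; last by rewrite mulr0.
by move: Hi; rewrite Eij Hj.
Qed.

Lemma sub_affine_image_masked n n' d (X : ('I_n -> R) -> Prop) (Z : ('I_n' -> R) -> Prop)
    (p : pred 'I_n') (W : 'I_n' -> 'I_n -> R) b :
  sub_affine_image d X ->
  (forall z, Z z -> exists2 x, X x & forall i, z i = if p i then preact W b x i else 0) ->
  sub_affine_image d Z.
Proof.
move=> [M [c HX]] HZ.
exists (fun i k => if p i then \sum_j M j k * W i j else 0),
       (fun i => if p i then \sum_j c j * W i j + b i else 0) => z /HZ [x /HX [y Hy] Hz].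
exists y => i; rewrite Hz (preact_eq _ _ Hy) preact_comp /preact.
by case: (p i); rewrite // big1 ?add0r // => k _; rewrite mulr0.
Qed.

Lemma signature_reparam n n' d (X : ('I_n -> R) -> Prop) (W : 'I_n' -> 'I_n -> R) b :
  sub_affine_image d X ->
  exists (W' : 'I_n' -> 'I_(minn d n') -> R) b',
    forall x, X x -> exists y, signature W b x = signature W' b' y.
Proof.
case: (leqP d n') => [_ [M [c HX]] | _ _].
  exists (fun i k => \sum_j M j k * W i j), (fun i => \sum_j c j * W i j + b i) => x /HX [y Hy].
  by exists y; apply: signature_eq => i; rewrite (preact_eq _ _ Hy) preact_comp.
exists (fun i j => (i == j)%:R), (fun _ => 0) => x _.
by exists (preact W b x); apply: signature_eq => i; rewrite preact_idmx.
Qed.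

Definition next_inputs n n' (D : ('I_n -> R) -> Prop) (W : 'I_n' -> 'I_n -> R) b f :=
  fun z : 'I_n' -> R =>
    exists2 x, D x & bitseq_of (signature W b x) = f /\ z = (fun i => relu (preact W b x i)).

Lemma sub_affine_image_next_inputs n n' d D (W : 'I_n' -> 'I_n -> R) b f :
  sub_affine_image d D -> sub_affine_image (minn (count id f) d) (next_inputs D W b f).
Proof.
move=> HD; have next_masked z : next_inputs D W b f z ->
    exists2 x, D x & forall i, z i = if nth false f i then preact W b x i else 0.
  by case=> x Dx [<- ->]; exists x => // i; rewrite relu_preact nth_bitseq_of.
case: (leqP (count id f) d) => [_ | _]; last exact: sub_affine_image_masked HD next_masked.
case: (pselect (exists2 x, D x & bitseq_of (signature W b x) = f)) => [[x0 _ Hx0] | Hnone].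
  have -> : count id f = #|[set i : 'I_n' | nth false f i]|.
    rewrite -Hx0 count_bitseq_of /weight -sum1dep_card [RHS]big_mkcond.
    by apply: eq_bigr => i _; rewrite nth_bitseq_of; case: (signature W b x0 i).
  apply: sub_affine_image_support => z /next_masked [x _ Hz] i.
  by rewrite Hz inE => /negbTE ->.
by exists (fun _ _ => 0), (fun _ => 0) => z [x Dx [Ef _]]; case: Hnone; exists x.
Qed.

(* Unlike the finite functions of [multisig], these lists do not depend on the
   layer widths, which lets the induction drop the first layer. *)
Definition multisig_bits (ns : nat -> nat) (Ws : forall l, 'I_(ns l.+1) -> 'I_(ns l) -> R)
    (bs : forall l, 'I_(ns l.+1) -> R) L x : seq bitseq :=
  [seq bitseq_of (signature (Ws l) (bs l) (forward Ws bs x l)) | l <- iota 0 L].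

Lemma forward_shift ns (Ws : forall l, 'I_(ns l.+1) -> 'I_(ns l) -> R) bs x l :
  @forward R (fun l => ns l.+1) (fun l => Ws l.+1) (fun l => bs l.+1) (forward Ws bs x 1) l
  = forward Ws bs x l.+1.
Proof. by elim: l => [|l IH] //=; rewrite IH. Qed.

Lemma multisig_bitsS ns (Ws : forall l, 'I_(ns l.+1) -> 'I_(ns l) -> R) bs L x :
  multisig_bits Ws bs L.+1 x =
  bitseq_of (signature (Ws 0) (bs 0) x) ::
  multisig_bits (ns := fun l => ns l.+1) (fun l => Ws l.+1) (fun l => bs l.+1) L
    (forward Ws bs x 1).
Proof.
rewrite {1}/multisig_bits -[iota 0 _]/(0 :: iota 1 L) -[1%N]/(1 + 0)%N iotaDl.
rewrite map_cons -map_comp.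
by congr (_ :: _); apply: eq_map => l /=; rewrite forward_shift.
Qed.

End AffineImages.

(** * Transition maps *)

Section TransitionMap.
Variable gamma : nat -> nat -> hist.

Definition clip_gamma n' k := hclip (minn k n') (gamma (minn k n') n').

Definition phi_iter (ns : nat -> nat) L v := foldl (fun v l => phi gamma (ns l) v) v (iota 1 L).

Definition msig_bound ns L k := hnorm1 (phi_iter ns L (he k)).

Lemma size_clip_gamma n' k : size (clip_gamma n' k) <= n'.+1.
Proof. by rewrite size_hclip ltnS geq_minr. Qed.

Lemma hcoef_phi n' v j :
  hcoef (phi gamma n' v) j = \sum_(k < size v) hcoef v k * hcoef (clip_gamma n' k) j.
Proof.
rewrite /phi -(big_mkord xpredT (fun k => hcoef v k * hcoef (clip_gamma n' k) j)).
rewrite /index_iota subn0.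
elim: (iota 0 (size v)) => [|k s IH]; first by rewrite big_nil /hcoef nth_nil.
by rewrite big_cons -IH; cbn [map foldr]; rewrite hcoef_hadd hcoef_hscale.
Qed.

Lemma size_phi n' v : size (phi gamma n' v) <= n'.+1.
Proof.
rewrite /phi; elim: (iota 0 (size v)) => [|k s IH] //; cbn [map foldr].
by rewrite size_mkseq geq_max size_map size_clip_gamma IH.
Qed.

Lemma hcoef_phi_he n' k j : hcoef (phi gamma n' (he k)) j = hcoef (clip_gamma n' k) j.
Proof.
rewrite hcoef_phi size_he; under eq_bigr => i _ do rewrite hcoef_he eq_sym.
by rewrite (sum_ord_pred1 k.+1 k (fun i => hcoef (clip_gamma n' i) j)) ltnSn mul1n.
Qed.

Lemma phi_iterS ns L v :
  phi_iter ns L.+1 v = phi_iter (fun l => ns l.+1) L (phi gamma (ns 1) v).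
Proof.
rewrite /phi_iter /= -[2]/(1 + 1) iotaDl.
by elim: (iota 1 L) (phi gamma (ns 1) v) => [|a s IH] w //=.
Qed.

Lemma hnorm1_phi_iter L : forall ns v m, size v <= m ->
  hnorm1 (phi_iter ns L v) = \sum_(k < m) hcoef v k * msig_bound ns L k.
Proof.
elim: L => [|L IH] ns v m Hm.
  rewrite /msig_bound /phi_iter /= hnorm1_htail0 (htail_sum 0 Hm).
  by apply: eq_bigr => k _; rewrite hnorm1_he muln1 leq0n mul1n.
rewrite /msig_bound phi_iterS (IH _ _ _ (size_phi _ _)).
under eq_bigr => j _ do rewrite hcoef_phi big_distrl.
rewrite exchange_big /= [RHS](sum_hcoef_widen (fun k => hnorm1 (phi_iter ns L.+1 (he k))) Hm).
apply: eq_bigr => k _.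
rewrite phi_iterS (IH _ _ _ (size_phi _ _)) big_distrr; apply: eq_bigr => j _.
by rewrite hcoef_phi_he /= mulnA.
Qed.

Lemma msig_boundS ns L k m : (ns 1).+1 <= m ->
  msig_bound ns L.+1 k =
  \sum_(j < m) hcoef (clip_gamma (ns 1) k) j * msig_bound (fun l => ns l.+1) L j.
Proof.
move=> Hm; rewrite {1}/msig_bound phi_iterS (hnorm1_phi_iter _ _ (leq_trans (size_phi _ _) Hm)).
by apply: eq_bigr => j _; rewrite hcoef_phi_he.
Qed.

End TransitionMap.

(** * The counting bound *)

Section Bounds.
Variables (R : realType) (gamma : nat -> nat -> hist).
Hypothesis Hgamma : inGamma R gamma.

Lemma leq_htail_clip_gamma n' k k' J : 0 < n' -> k <= k' ->
  htail (clip_gamma gamma n' k) J <= htail (clip_gamma gamma n' k') J.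
Proof.
move=> Hn Hk; rewrite /clip_gamma !htail_hclip.
have Hmin : minn k n' <= minn k' n'.
  by rewrite leq_min geq_minr andbT (leq_trans (geq_minl _ _) Hk).
case: ifP => // HJ; rewrite (leq_trans HJ Hmin).
exact: Hgamma.2 n' _ _ Hn Hmin (geq_minr _ _) J.
Qed.

Lemma msig_bound_nondecr L : forall ns, (forall l, 0 < l <= L -> 0 < ns l) ->
  forall k, msig_bound gamma ns L k <= msig_bound gamma ns L k.+1.
Proof.
elim: L => [|L IH] ns Hns k; first by rewrite /msig_bound /phi_iter /= !hnorm1_he.
rewrite !(msig_boundS _ _ _ (leqnn _)).
apply: leq_sum_by_parts => [|J].
  exact/IH/pos_widths_shift.
rewrite -!(htail_sum J (size_clip_gamma _ _ _)).
by apply: leq_htail_clip_gamma; first exact: Hns.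
Qed.

Lemma leq_htail_gamma r n' v J : 0 < n' -> r <= n' -> RLhists R r n' v ->
  htail v J <= htail (gamma r n') J.
Proof.
move=> Hn Hr Hv; have [fam [Hfam Hle]] := Hgamma.1 n' r Hn Hr.
by apply: leq_trans (Hle J); apply: leq_htail_hmax; apply/Hfam.
Qed.

Lemma count_weight_le_gamma r n' (W : 'I_n' -> 'I_r -> R) b F J :
  0 < n' -> r <= n' -> J <= r -> uniq F ->
  (forall f, f \in F -> exists y, f = bitseq_of (signature W b y)) ->
  count (fun f => J <= count id f) F <= htail (gamma r n') J.
Proof.
move=> Hn Hr HJ Fu HF; case: (posnP r) => [r0 | r_gt0].
  subst r; move: HJ; rewrite leqn0 => /eqP ->.
  apply: leq_trans (count_size _ _) _.
  apply: leq_trans (leq_htail_gamma 0 Hn Hr (_ : RLhists R 0 n' (he 0))) => //.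
  rewrite -hnorm1_htail0 hnorm1_he.
  apply: (uniq_leq_size (s2 := [:: bitseq_of (signature W b (fun _ => 0%R))])) => // f /HF [y ->].
  rewrite mem_seq1; apply/eqP; congr bitseq_of.
  by apply: signature_eq => i; rewrite /preact !big_ord0.
have Hv : RLhists R r n' (acthist (sigset W b)).
  by rewrite /RLhists (negbTE (lt0n_neq0 r_gt0)); exists W, b.
apply: leq_trans (leq_htail_gamma J Hn Hr Hv); rewrite htail_acthist.
rewrite (_ : [set s in sigset W b | J <= weight s] =
             [set s in sigset W b | J <= count id (bitseq_of s)]); last first.
  by apply/setP => s; rewrite !inE count_bitseq_of.
apply: count_le_card_bitseq => // f /HF [y ->]; exists (signature W b y) => //.
by rewrite inE; apply/asboolP; exists y.
Qed.

Lemma count_clipped_weight_le n n' d (D : ('I_n -> R) -> Prop) (W : 'I_n' -> 'I_n -> R) b F J :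
  0 < n' -> sub_affine_image d D -> uniq F ->
  (forall f, f \in F -> exists2 x, D x & f = bitseq_of (signature W b x)) ->
  count (fun f => J <= minn (count id f) d) F <= htail (clip_gamma gamma n' d) J.
Proof.
move=> Hn HD Fu HF; rewrite /clip_gamma htail_hclip; case: ifP => HJ; last first.
  rewrite (eq_in_count (a2 := pred0)) ?count_pred0 // => f /HF [x _ ->] /=.
  apply: contraFF HJ => /leq_trans; apply.
  by rewrite leq_min geq_minr /= (leq_trans (geq_minl _ _)) // count_bitseq_of weight_le.
apply: leq_trans (sub_count (a2 := fun f => J <= count id f) _ F) _.
  by move=> f /= /leq_trans; apply; exact: geq_minl.
have [W' [b' Hsig]] := signature_reparam W b HD.
apply: (count_weight_le_gamma (W := W') (b := b') Hn (geq_minr _ _) HJ Fu) => f /HF [x Dx ->].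
by have [y ->] := Hsig x Dx; exists y.
Qed.

Lemma sum_first_layer_le ns L d (D : ('I_(ns 0) -> R) -> Prop)
    (W : 'I_(ns 1) -> 'I_(ns 0) -> R) b F :
  (forall l, 0 < l <= L.+1 -> 0 < ns l) -> sub_affine_image d D -> uniq F ->
  (forall f, f \in F -> exists2 x, D x & f = bitseq_of (signature W b x)) ->
  \sum_(f <- F) msig_bound gamma (fun l => ns l.+1) L (minn (count id f) d)
    <= msig_bound gamma ns L.+1 d.
Proof.
move=> Hns HD Fu HF; set m := d.+1 + (ns 1).+1.
have Hm f : f \in F -> minn (count id f) d < m.
  by move=> _; rewrite (leq_ltn_trans (geq_minr _ _)) // ltn_addr.
have Hclip : size (clip_gamma gamma (ns 1) d) <= m.
  by rewrite (leq_trans (size_clip_gamma _ _ _)) // leq_addl.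
rewrite (sum_by_value _ Hm) (msig_boundS _ _ _ (leq_addl _ _ : (ns 1).+1 <= m)).
apply: (leq_sum_by_parts (u := fun k => count (fun f => minn (count id f) d == k) F)
                         (w := hcoef (clip_gamma gamma (ns 1) d))) => [|J].
  exact/msig_bound_nondecr/pos_widths_shift.
rewrite tail_by_value // -htail_sum //.
by apply: count_clipped_weight_le HD Fu HF; apply: Hns.
Qed.

Lemma size_multisig_bits_le L : forall ns (Ws : forall l, 'I_(ns l.+1) -> 'I_(ns l) -> R) bs,
  (forall l, 0 < l <= L -> 0 < ns l) ->
  forall d (D : ('I_(ns 0) -> R) -> Prop), sub_affine_image d D ->
  forall S, uniq S -> (forall t, t \in S -> exists2 x, D x & multisig_bits Ws bs L x = t) ->
  size S <= msig_bound gamma ns L d.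
Proof.
elim: L => [|L IH] ns Ws bs Hns d D HD S Su HS.
  rewrite /msig_bound /phi_iter /= hnorm1_he.
  by apply: (uniq_leq_size (s2 := [:: [::]])) => // t /HS [x _ <-]; rewrite mem_seq1.
set heads := undup [seq head [::] t | t <- S].
have Hheads f : f \in heads -> exists2 x, D x & f = bitseq_of (signature (Ws 0) (bs 0) x).
  by rewrite mem_undup => /mapP [t /HS [x Dx <-] ->]; exists x; rewrite // multisig_bitsS.
rewrite (size_partition (g := head [::]) (F := heads) (undup_uniq _)) => [|f];
  last by rewrite mem_undup.
apply: leq_trans (sum_first_layer_le Hns HD (undup_uniq _) Hheads).
rewrite big_seq [leqRHS]big_seq; apply: leq_sum => f Hf.
rewrite -size_filter -(size_map behead).
apply: (IH _ _ _ _ _ _ (sub_affine_image_next_inputs (Ws 0) (bs 0) f HD)).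
- exact: pos_widths_shift.
- by apply: uniq_behead_class => //; apply/negP => /HS [x _]; rewrite multisig_bitsS.
- move=> _ /mapP [t + ->]; rewrite mem_filter => /andP [/eqP Ht /HS [x Dx Ex]].
  exists (forward Ws bs x 1); last by rewrite -Ex multisig_bitsS.
  by exists x; rewrite // -Ht -Ex multisig_bitsS.
Qed.

End Bounds.

Theorem mainTheorem1 (R : realType) (L : nat) (ns : nat -> nat)
  (HL : 0 < L) (Hns : forall l, l <= L -> 0 < ns l)
  (Ws : forall l : nat, 'I_(ns l.+1) -> 'I_(ns l) -> R)
  (bs : forall l : nat, 'I_(ns l.+1) -> R)
  (gamma : nat -> nat -> hist) (Hgamma : inGamma R gamma) :
  #|multisigset L Ws bs| <= hnorm1 (phi_comp gamma ns L).
Proof.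
pose to_bits (s : {dffun forall l : 'I_L, {ffun 'I_(ns (nat_of_ord l).+1) -> bool}}) :=
  [seq bitseq_of (s l) | l <- enum 'I_L].
have to_bits_inj : injective to_bits.
  move=> s t E; apply/ffunP => l; apply: bitseq_of_inj.
  have := congr1 (nth [::] ^~ l) E.
  by rewrite /= !(nth_map l) -?enumT ?size_enum_ord // ?nth_ord_enum.
rewrite cardE -(size_map to_bits).
have -> : hnorm1 (phi_comp gamma ns L) = msig_bound gamma ns L (ns 0) by [].
apply: (size_multisig_bits_le (Ws := Ws) (bs := bs) Hgamma _ (sub_affine_imageT R _)).
- by move=> l /andP [_ /Hns].
- by rewrite map_inj_uniq ?enum_uniq.
- move=> t /mapP [s]; rewrite mem_enum inE => /asboolP [x <-] ->; exists x => //.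
  by rewrite /multisig_bits -val_enum_ord -map_comp; apply: eq_map => l /=; rewrite ffunE.
Qed.
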